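(* Let $(\mathcal{P},+)$ be a reparametrization category, let $D_1,D_2$ be $\mathcal{P}$-spaces and $L\in\mathrm{Obj}(\mathcal{P})$. Then the mapping sending $(x,y)\in D_1(\ell_1)\times D_2(\ell_2)$ to the equivalence class of $(\mathrm{id}_L,x,y)$ yields a surjective continuous map \[\bigsqcup_{\substack{(\ell_1,\ell_2)\\ \ell_1+\ell_2=L}}D_1(\ell_1)\times D_2(\ell_2)\longrightarrow (D_1\otimes D_2)(L).\]
   Context: All enriched categories are enriched over the cartesian closed category $\mathbf{Top}$ of ($\Delta$-generated) topological spaces. A reparametrization category is a small enriched semimonoidal category $(\mathcal{P},\otimes)$ (hom-sets are spaces, composition and $\mathcal{P}(a,b)\times\mathcal{P}(c,d)\to\mathcal{P}(a\otimes c,b\otimes d)$ continuous) such that: (1) the semimonoidal structure is strict; (2) all spaces $\mathcal{P}(\ell,\ell')$ are contractible; (3) for every map $\phi:\ell\to\ell'$ and all objects $\ell'_1,\ell'_2$ with $\ell'_1\otimes\ell'_2=\ell'$, there exist maps $\phi_1:\ell_1\to\ell'_1$, $\phi_2:\ell_2\to\ell'_2$ with $\phi=\phi_1\otimes\phi_2$. One writes $\ell+\ell':=\ell\otimes\ell'$ on objects. A $\mathcal{P}$-space is an enriched functor $D:\mathcal{P}^{op}\to\mathbf{Top}$; for $\phi:\ell\to\ell'$ and $x\in D(\ell')$ write $x.\phi=D(\phi)(x)$. The tensor product of $\mathcal{P}$-spaces is $D_1\otimes D_2=\int^{(\ell_1,\ell_2)}\mathcal{P}(-,\ell_1+\ell_2)\times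 D_1(\ell_1)\times D_2(\ell_2)$; thus $(D_1\otimes D_2)(L)$ is a quotient of $\bigsqcup_{(\ell_1,\ell_2)}\mathcal{P}(L,\ell_1+\ell_2)\times D_1(\ell_1)\times D_2(\ell_2)$, its elements being equivalence classes of triples $(\psi,x,y)$. *)

From HB Require Import structures.
From mathcomp Require Import all_boot all_order all_algebra generic_quotient.
From mathcomp Require Import all_classical all_reals topology.
From mathcomp Require Import Rstruct Rstruct_topology.
From Stdlib Require Import Relations.

Set Implicit Arguments.
Unset Strict Implicit.
Unset Printing Implicit Defensive.

Local Open Scope classical_set_scope.
Local Open Scope quotient_scope.

Definition hcast {O : Type} (H : O -> O -> Type) {a a' b b' : O}
  (e1 : a = a') (e2 : b = b') (f : H a b) : H a' b' :=
  eq_rect a (fun o => H o b') (eq_rect b (fun o => H a o) f b' e2) a' e1.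
Arguments hcast {O} H {a a' b b'} e1 e2 f.

Definition unit_itv : Type := subspace (`[0%R, 1%R] : set Rdefinitions.R).

Definition contractible (X : topologicalType) : Prop :=
  exists (c : X) (H : unit_itv * X -> X),
    continuous H /\
    (forall x, H ((0%R : Rdefinitions.R), x) = x) /\
    (forall x, H ((1%R : Rdefinitions.R), x) = c).

(* A reparametrization category: small Top-enriched strict semimonoidal
   category with contractible hom-spaces and the splitting property (3). *)
Record RepCat := {
  Obj : choiceType;
  Hom : Obj -> Obj -> topologicalType;
  idm : forall a, Hom a a;
  comp : forall a b c, Hom b c -> Hom a b -> Hom a c;
  comp_cont : forall a b c,
    continuous (fun p : Hom b c * Hom a b => comp p.1 p.2);
  comp_id_l : forall a b (f : Hom a b), comp (idm b) f = f;
  comp_id_r : forall a b (f : Hom a b), comp f (idm a) = f;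
  comp_assoc : forall a b c d (f : Hom c d) (g : Hom b c) (h : Hom a b),
    comp f (comp g h) = comp (comp f g) h;
  otimes : Obj -> Obj -> Obj;
  tens : forall a b c d, Hom a b -> Hom c d -> Hom (otimes a c) (otimes b d);
  tens_cont : forall a b c d,
    continuous (fun p : Hom a b * Hom c d => tens p.1 p.2);
  tens_id : forall a c, tens (idm a) (idm c) = idm (otimes a c);
  tens_comp : forall a b c a' b' c' (f : Hom b c) (g : Hom a b)
      (f' : Hom b' c') (g' : Hom a' b'),
    tens (comp f g) (comp f' g') = comp (tens f f') (tens g g');
  otimes_assoc : forall a b c, otimes a (otimes b c) = otimes (otimes a b) c;
  tens_assoc : forall a b c a' b' c' (f : Hom a a') (g : Hom b b') (h : Hom c c'),
    hcast (fun x y => Hom x y : Type) (@otimes_assoc a b c) (@otimes_assoc a' b' c')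
      (tens f (tens g h)) = tens (tens f g) h;
  hom_contractible : forall a b, contractible (Hom a b);
  hom_split : forall l l' (phi : Hom l l') l1' l2' (e' : otimes l1' l2' = l'),
    exists l1 l2 (e : otimes l1 l2 = l) (phi1 : Hom l1 l1') (phi2 : Hom l2 l2'),
      phi = hcast (fun x y => Hom x y : Type) e e' (tens phi1 phi2)
}.

Arguments idm {r a}.
Arguments comp {r a b c}.
Arguments tens {r a b c d}.
Arguments otimes {r}.

(* A P-space: an enriched functor P^op -> Top; act x phi = x.phi *)
Record PSpace (P : RepCat) := {
  sp : Obj P -> topologicalType;
  act : forall l l', sp l' -> Hom l l' -> sp l;
  act_cont : forall l l', continuous (fun p : sp l' * Hom l l' => act p.1 p.2);
  act_id : forall l (x : sp l), act x idm = x;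
  act_comp : forall l'' l l' (x : sp l') (phi : Hom l l') (psi : Hom l'' l),
    act x (comp phi psi) = act (act x phi) psi
}.

Arguments act {P} p {l l'}.

Section Tensor.
Variables (P : RepCat) (D1 D2 : PSpace P) (L : Obj P).

Definition coend_summand (p : Obj P * Obj P) : topologicalType :=
  (Hom L (otimes p.1 p.2) * (sp D1 p.1 * sp D2 p.2))%type.

Definition coend_sum := {p : (Obj P * Obj P)%type & coend_summand p}.

Inductive coend_step : coend_sum -> coend_sum -> Prop :=
| CoendStep l1 l2 l1' l2' (phi1 : Hom l1 l1') (phi2 : Hom l2 l2')
    (psi : Hom L (otimes l1 l2)) (x : sp D1 l1') (y : sp D2 l2') :
    coend_step
      (existT coend_summand (l1, l2) (psi, (act D1 x phi1, act D2 y phi2)))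
      (existT coend_summand (l1', l2') (comp (tens phi1 phi2) psi, (x, y))).

Definition coend_rel' (s t : coend_sum) : bool :=
  `[< clos_refl_sym_trans _ coend_step s t >].

Local Lemma coend_rel_refl : ssrbool.reflexive coend_rel'.
Proof. by move=> s; apply/asboolP; apply: rst_refl. Qed.

Local Lemma coend_rel_sym : ssrbool.symmetric coend_rel'.
Proof.
move=> s t; apply/idP/idP => /asboolP H; apply/asboolP; exact: rst_sym.
Qed.

Local Lemma coend_rel_trans : ssrbool.transitive coend_rel'.
Proof.
move=> t s u /asboolP H1 /asboolP H2; apply/asboolP; exact: rst_trans H1 H2.
Qed.

Definition coend_rel := EquivRel coend_rel' coend_rel_refl coend_rel_sym coend_rel_trans.

Definition tensor_at := {eq_quot coend_rel}.
HB.instance Definition _ := Topological.copy tensor_at (quotient_topology tensor_at).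
HB.instance Definition _ := Quotient.on tensor_at.

Definition split_idx := {p : (Obj P * Obj P)%type | otimes p.1 p.2 == L}.
Definition split_summand (i : split_idx) : topologicalType :=
  (sp D1 (val i).1 * sp D2 (val i).2)%type.
Definition split_sum := {i : split_idx & split_summand i}.

Definition id_class (s : split_sum) : tensor_at :=
  \pi_tensor_at (existT coend_summand (val (projT1 s))
    (hcast (fun x y => Hom x y : Type) erefl (esym (eqP (valP (projT1 s)))) idm,
     projT2 s)).

End Tensor.

From Pilot Require Import Defs.
From HB Require Import structures.
From mathcomp Require Import all_boot all_order all_algebra generic_quotient.
From mathcomp Require Import all_classical all_reals topology.
From Stdlib Require Import Relations.

(* On each summand the map is z |-> [(id_L, z)], a composite of continuous
   maps into the coproduct followed by the quotient map.  For surjectivity,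
   split a representative (psi, x, y), psi : L -> l1 + l2, as
   psi = phi1 + phi2 with phi_i : k_i -> l_i and k1 + k2 = L; one step of
   the coend relation identifies it with (id_L, x.phi1, y.phi2). *)

Local Open Scope quotient_scope.

Lemma comp_hcast_idm (P : RepCat) (a b c : Obj P) (e : a = b) (f : Defs.Hom a c) :
  Defs.comp f (hcast (fun x y => Defs.Hom x y : Type) erefl (esym e) idm) =
  hcast (fun x y => Defs.Hom x y : Type) e erefl f.
Proof. by case: b / e; rewrite /= comp_id_r. Qed.

Section TensorAt.
Variables (P : RepCat) (D1 D2 : PSpace P) (L : Obj P).

Lemma tensor_at_pi_act {l1 l2 l1' l2'} (phi1 : Defs.Hom l1 l1') (phi2 : Defs.Hom l2 l2')
    (psi : Defs.Hom L (otimes l1 l2)) (x : sp D1 l1') (y : sp D2 l2') :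
  \pi_(tensor_at D1 D2 L)
    (existT (coend_summand D1 D2 L) (l1, l2) (psi, (act D1 x phi1, act D2 y phi2))) =
  \pi_(tensor_at D1 D2 L)
    (existT (coend_summand D1 D2 L) (l1', l2') (Defs.comp (tens phi1 phi2) psi, (x, y))).
Proof. by apply/eqmodP/asboolP/rst_step; constructor. Qed.

Lemma tensor_at_pi_summand_continuous (l : Obj P * Obj P)
    (psi : Defs.Hom L (otimes l.1 l.2)) :
  continuous (fun z => \pi_(tensor_at D1 D2 L) (existT (coend_summand D1 D2 L) l (psi, z))).
Proof.
move=> z; apply: (@continuous_comp _ _ _
  (fun z => existT (coend_summand D1 D2 L) l (psi, z)) \pi_(tensor_at D1 D2 L));
  last exact: pi_continuous.
apply: (@continuous_comp _ _ _ (pair psi) (existT _ l)); last exact: existT_continuous.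
exact: cvg_pair (cvg_cst psi) cvg_id.
Qed.

Lemma id_class_continuous : continuous (@id_class P D1 D2 L).
Proof.
exact (@sigT_continuous _ (@split_summand P D1 D2 L) _
  (fun i z => @id_class P D1 D2 L (existT _ i z))
  (fun i => @tensor_at_pi_summand_continuous (val i)
     (hcast (fun x y => Defs.Hom x y : Type) erefl (esym (eqP (valP i))) idm))).
Qed.

Lemma id_class_surjective (q : tensor_at D1 D2 L) : exists s, id_class s = q.
Proof.
elim/quotW: q => -[[l1 l2] [psi [x y]]] /=.
have [k1 [k2 [e [phi1 [phi2 ->]]]]] := hom_split psi (erefl (otimes l1 l2)).
pose i : split_idx L := exist _ (k1, k2) (introT eqP e).
exists (existT (@split_summand P D1 D2 L) i (act D1 x phi1, act D2 y phi2)).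
rewrite (eq_irrelevance e (eqP (valP i))) -comp_hcast_idm.
exact: (tensor_at_pi_act phi1 phi2 _ x y).
Qed.

End TensorAt.

Theorem proposition3p3 (P : RepCat) (D1 D2 : PSpace P) (L : Obj P) :
  continuous (@id_class P D1 D2 L) /\
  (forall q : tensor_at D1 D2 L, exists s, id_class s = q).
Proof. split; [exact: id_class_continuous | exact: id_class_surjective]. Qed.
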